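(* Assume (A1) and (B2), and let $b_n$ be random vectors with $\|b_n-b\|=O_{\mathbb P}(r_n^{-1})$ for a deterministic sequence $r_n\to\infty$. Then $$d_H\big(OPT(b_n),OPT(b)\big)=O_{\mathbb P}(r_n^{-1}),$$ where $d_H(S,T)=\max\{\sup_{x\in S}\inf_{y\in T}\|x-y\|,\ \sup_{x\in T}\inf_{y\in S}\|x-y\|\}$ is the Hausdorff distance.
   Context: $A\in\mathbb{R}^{m\times d}$ has full rank $m\le d$, $b\in\mathbb{R}^m$, $c\in\mathbb{R}^d$. For $\beta\in\mathbb{R}^m$, $(\mathrm{P}_\beta)$ is $\min c^Tx$ s.t. $Ax=\beta$, $x\ge0$, and $OPT(\beta)$ is its set of optimal solutions. (A1): $OPT(b)$ is non-empty and bounded. (B2): $\mathbb{P}((\mathrm{P}_{b_n})\text{ has an optimal solution})\to1$. *)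

From mathcomp Require Import all_boot all_order all_algebra.
From mathcomp Require Import all_classical all_reals all_analysis.
Set Implicit Arguments. Unset Strict Implicit. Unset Printing Implicit Defensive.
Import Order.TTheory GRing.Theory Num.Theory.
Local Open Scope classical_set_scope.
Local Open Scope ring_scope.

Definition enorm (R : realType) (k : nat) (x : 'cV[R]_k) : R :=
  Num.sqrt (\sum_(i < k) x i 0 ^+ 2).

Definition feasible (R : realType) (m d : nat) (A : 'M[R]_(m, d))
  (beta : 'cV[R]_m) : set 'cV[R]_d :=
  [set x | A *m x = beta /\ forall i : 'I_d, 0 <= x i 0].

Definition obj (R : realType) (d : nat) (c x : 'cV[R]_d) : R :=
  \sum_(i < d) c i 0 * x i 0.

Definition OPT (R : realType) (m d : nat) (A : 'M[R]_(m, d)) (c : 'cV[R]_d)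
  (beta : 'cV[R]_m) : set 'cV[R]_d :=
  [set x | feasible A beta x /\
           forall y, feasible A beta y -> obj c x <= obj c y].

(* Hausdorff distance (extended-real valued; sup of empty = -oo,
   inf of empty = +oo). *)
Definition hausdorff (R : realType) (d : nat) (S T : set 'cV[R]_d) : \bar R :=
  maxe (ereal_sup [set ereal_inf [set (enorm (x - y))%:E | y in T] | x in S])
       (ereal_sup [set ereal_inf [set (enorm (x - y))%:E | y in S] | x in T]).

(* X_n = O_P(a_n), stated via inner probability (no measurability of X_n
   required): for every eps > 0 there are M > 0 and N such that for n >= N,
   X_n <= M a_n on a measurable event of probability >= 1 - eps. *)
Definition OP_bound (R : realType) (dO : measure_display) (Omega : measurableType dO)
  (P : probability Omega R) (X : nat -> Omega -> \bar R) (a : nat -> R) : Prop :=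
  forall eps : R, 0 < eps -> exists M : R, 0 < M /\ exists N : nat,
    forall n, (N <= n)%N -> exists E : set Omega, measurable E /\
      (P E >= (1 - eps)%:E)%E /\ forall w, E w -> (X n w <= (M * a n)%:E)%E.

From mathcomp Require Import all_boot all_order all_algebra.
From mathcomp Require Import all_classical all_reals all_analysis.
From mathcomp Require Import lra.
Import Order.TTheory GRing.Theory Num.Theory.
Local Open Scope ring_scope.
Set Implicit Arguments. Unset Strict Implicit. Unset Printing Implicit Defensive.

(* The theorem is deterministic at heart: beta |-> OPT(beta) is Lipschitz
   for the Hausdorff distance on the right-hand sides where (P_beta) is
   solvable (Walkup-Wets).  On the event where (P_{b_n}) is solvable we then
   have d_H(OPT(b_n), OPT(b)) <= K |b_n - b|, and the O_P rate of b_n - b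
   transfers.

   The Lipschitz bound rests on a conformal Hoffman lemma: every w has a z
   with A z = A w, each z_i between 0 and w_i, and |z|_1 <= C |A w|_1.  It is
   proved by induction over the finitely many orthant cones (support S, sign
   pattern P), moving along kernel vectors by a ratio test; a preliminary
   induction of the same shape bounds |w| by |A w| on cones where A is
   injective.  Applying the lemma to A and to A stacked with c^T shows that
   feasible sets, optimal values and optimal sets move Lipschitz-continuously.
   A union bound on the two high-probability events concludes. *)

Section Norm1.
Variable R : realType.

(* The l1 norm of a column vector; all polyhedral estimates are done in it. *)
Definition norm1 k (v : 'cV[R]_k) : R := \sum_(i < k) `|v i 0|.

Lemma norm1_ge0 k (v : 'cV[R]_k) : 0 <= norm1 v.
Proof. exact: sumr_ge0. Qed.

Lemma norm1_entry k (v : 'cV[R]_k) i : `|v i 0| <= norm1 v.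
Proof. by rewrite /norm1 (bigD1 i) //= lerDl sumr_ge0. Qed.

Lemma norm10 k : norm1 (0 : 'cV[R]_k) = 0.
Proof. by rewrite /norm1 big1 // => i _; rewrite mxE normr0. Qed.

Lemma norm1D k (u v : 'cV[R]_k) : norm1 (u + v) <= norm1 u + norm1 v.
Proof.
rewrite /norm1 -big_split /=; apply: ler_sum => i _; rewrite mxE; exact: ler_normD.
Qed.

Lemma norm1Z k (a : R) (v : 'cV[R]_k) : norm1 (a *: v) = `|a| * norm1 v.
Proof. by rewrite /norm1 mulr_sumr; apply: eq_bigr => i _; rewrite mxE normrM. Qed.

Lemma norm1B k (u v : 'cV[R]_k) : norm1 (u - v) = norm1 (v - u).
Proof. by apply: eq_bigr => i _; rewrite -opprB mxE normrN. Qed.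

Lemma norm1_col_mx p q (u : 'cV[R]_p) (v : 'cV[R]_q) :
  norm1 (col_mx u v) = norm1 u + norm1 v.
Proof.
by rewrite /norm1 big_split_ord; congr (_ + _); apply: eq_bigr => i _;
  rewrite ?col_mxEu ?col_mxEd.
Qed.

Definition mxsum p k (M : 'M[R]_(p, k)) : R := \sum_(i < p) \sum_(j < k) `|M i j|.

Lemma norm1_mul p k (M : 'M[R]_(p, k)) (v : 'cV[R]_k) :
  norm1 (M *m v) <= mxsum M * norm1 v.
Proof.
rewrite /norm1 /mxsum mulr_suml; apply: ler_sum => i _; rewrite mxE mulr_suml.
apply: le_trans (ler_norm_sum _ _ _) _; apply: ler_sum => j _.
by rewrite normrM ler_wpM2l ?norm1_entry.
Qed.

Lemma enorm_le_norm1 k (v : 'cV[R]_k) : enorm v <= norm1 v.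
Proof.
rewrite /enorm -(ger0_norm (norm1_ge0 v)) -sqrtr_sqr ler_sqrt ?sqr_ge0 //.
rewrite [norm1 v ^+ 2]expr2 mulr_suml; apply: ler_sum => i _.
by rewrite -real_normK ?num_real // expr2 ler_wpM2l ?norm1_entry.
Qed.

Lemma entry_le_enorm k (v : 'cV[R]_k) i : `|v i 0| <= enorm v.
Proof.
rewrite /enorm -sqrtr_sqr ler_sqrt; last by apply: sumr_ge0 => j _; rewrite sqr_ge0.
by rewrite (bigD1 i) //= lerDl; apply: sumr_ge0 => j _; rewrite sqr_ge0.
Qed.

Lemma norm1_le_enorm k (v : 'cV[R]_k) : norm1 v <= k%:R * enorm v.
Proof.
apply: le_trans (_ : \sum_(i < k) enorm v <= _).
  by apply: ler_sum => i _; exact: entry_le_enorm.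
by rewrite sumr_const card_ord mulr_natl.
Qed.

Lemma enormB k (u v : 'cV[R]_k) : enorm (u - v) = enorm (v - u).
Proof. by congr Num.sqrt; apply: eq_bigr => i _; rewrite -opprB mxE sqrrN mxE. Qed.

Lemma objD k (c u v : 'cV[R]_k) : obj c (u + v) = obj c u + obj c v.
Proof. by rewrite /obj -big_split; apply: eq_bigr => i _; rewrite mxE mulrDr. Qed.

Lemma objB k (c u v : 'cV[R]_k) : obj c (u - v) = obj c u - obj c v.
Proof. by rewrite /obj -sumrB; apply: eq_bigr => i _; rewrite !mxE mulrBr. Qed.

Lemma obj_trmx k (c v : 'cV[R]_k) : (c^T *m v) 0 0 = obj c v.
Proof. by rewrite mxE; apply: eq_bigr => j _; rewrite mxE. Qed.

Lemma obj_bound k (c z : 'cV[R]_k) : `|obj c z| <= norm1 c * norm1 z.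
Proof.
rewrite /obj /norm1 mulr_suml; apply: le_trans (ler_norm_sum _ _ _) _.
by apply: ler_sum => j _; rewrite normrM ler_wpM2l ?norm1_entry.
Qed.

End Norm1.

Section UniformBounds.
Variable R : realType.

Lemma finite_uniform_bound (T : finType) (Q : T -> R -> Prop) :
  (forall t D D', Q t D -> D <= D' -> Q t D') ->
  (forall t, exists D, 0 <= D /\ Q t D) -> exists D, 0 <= D /\ forall t, Q t D.
Proof.
move=> mono H; have [f Hf] := choice H.
have f_ge0 t : 0 <= f t by case: (Hf t).
exists (\sum_t f t); split; first exact: sumr_ge0.
by move=> t; apply: mono (proj2 (Hf t)) _; rewrite (bigD1 t) //= lerDl sumr_ge0.
Qed.

Lemma uniform_bound_by_card d (Q : {set 'I_d} -> {set 'I_d} -> R -> Prop) :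
  (forall S P D D', Q S P D -> D <= D' -> Q S P D') ->
  (forall n (D0 : R), 0 <= D0 ->
     (forall S P : {set 'I_d}, (#|S| < n)%N -> Q S P D0) ->
     forall S P : {set 'I_d}, #|S| = n -> exists D, 0 <= D /\ Q S P D) ->
  exists D, 0 <= D /\ forall S P, Q S P D.
Proof.
move=> mono step.
suff [D [D0 HD]] : exists D : R, 0 <= D /\
    forall S P : {set 'I_d}, (#|S| < d.+1)%N -> Q S P D.
  by exists D; split => // S P; apply: HD; rewrite ltnS (leq_trans (max_card _)) ?card_ord.
elim: d.+1 => [|n [D0 [D0ge IH]]]; first by exists 0.
have [D [Dge HD]] : exists D : R, 0 <= D /\
    forall t : {set 'I_d} * {set 'I_d}, (#|t.1| < n.+1)%N -> Q t.1 t.2 D.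
  apply: finite_uniform_bound => [t D D' H le /H /mono|[S P] /=]; first exact.
  case: (ltngtP #|S| n) => [Sn|Sn|Sn].
  - by exists D0; split => // _; exact: IH.
  - by exists 0; split => //; rewrite ltnS leqNgt Sn.
  - by have [D [Dge HD]] := step n D0 D0ge IH S P Sn; exists D.
by exists D; split => // S P; exact: (HD (S, P)).
Qed.

End UniformBounds.

Section SignedOrthants.
Variables (R : realType) (d : nat).
Implicit Types (S P : {set 'I_d}) (w k : 'cV[R]_d).

Definition sgn P i : R := if i \in P then 1 else -1.

Definition orthant S P w : Prop :=
  (forall i, i \notin S -> w i 0 = 0) /\ (forall i, 0 <= sgn P i * w i 0).

Lemma sgn_neq0 P i : sgn P i != 0.
Proof. by rewrite /sgn; case: ifP; rewrite ?oppr_eq0 oner_eq0. Qed.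

Lemma sgnK P i : sgn P i * sgn P i = 1.
Proof. by rewrite /sgn; case: ifP; rewrite ?mulrNN mulr1. Qed.

Lemma normr_sgnM P i (x : R) : `|sgn P i * x| = `|x|.
Proof. by rewrite normrM /sgn; case: ifP; rewrite ?normrN normr1 mul1r. Qed.

Lemma ratio_sgn P i (x y : R) : x / y = (sgn P i * x) / (sgn P i * y).
Proof. by rewrite /sgn; case: ifP; rewrite ?mul1r // !mulN1r invrN mulrNN. Qed.

Lemma orthant_sub S S' P w : S' \subset S -> orthant S' P w -> orthant S P w.
Proof.
move=> sub [wS wP]; split => // i iS; apply: wS.
by apply: contra iS; exact: (fintype.subsetP sub).
Qed.

Lemma orthant_full w : orthant [set: 'I_d] [set i | 0 < w i 0] w.
Proof.
split=> [i|i]; first by rewrite finset.in_setT.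
rewrite /sgn inE; case: ltP => [/ltW|]; first by rewrite mul1r.
by rewrite mulN1r oppr_ge0.
Qed.

Lemma orthant_pos_entry S P k :
  orthant S P k -> k != 0 -> exists j, 0 < sgn P j * k j 0.
Proof.
move=> [_ kP] k0; apply: contra_notP (negP k0) => H.
apply/eqP/matrixP => i j; rewrite (ord1 j) mxE.
have := kP i; rewrite le_eqVlt => /orP [/eqP/esym/eqP|ki]; last by case: H; exists i.
by rewrite mulf_eq0 (negbTE (sgn_neq0 P i)) => /eqP.
Qed.

Lemma not_orthant_neg_entry S P k :
  (forall i, i \notin S -> k i 0 = 0) -> ~ orthant S P k ->
  exists i, sgn P i * k i 0 < 0.
Proof.
move=> kS nk; apply: contra_notP nk => H; split => // i.
by rewrite leNgt; apply/negP => lt; apply: H; exists i.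
Qed.

(* Ratio test: moving from w in the orthant along -k as far as the orthant
   allows reaches a vector of the same orthant with one more zero coordinate. *)
Lemma ratio_step S P w k j1 :
  orthant S P w -> (forall i, i \notin S -> k i 0 = 0) ->
  0 < sgn P j1 * k j1 0 ->
  exists j t, [/\ j \in S, 0 <= t & orthant (S :\ j) P (w - t *: k)].
Proof.
move=> [wS wP] kS kj1.
have inS i : 0 < sgn P i * k i 0 -> i \in S.
  by move=> ki; apply: contraT => /kS k0; move: ki; rewrite k0 mulr0 ltxx.
pose J j := (j \in S) && (0 < sgn P j * k j 0).
have j1J : J j1 by rewrite /J kj1 inS.
have [j /andP [jS kj] jmin] := arg_minP (fun j => w j 0 / k j 0) j1J.
pose t := w j 0 / k j 0.
have t0 : 0 <= t by rewrite /t (ratio_sgn P j) divr_ge0 // ltW.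
exists j, t; split => //; split => i.
- rewrite in_setD1 negb_and negbK !mxE => /orP [/eqP ->|iS].
    rewrite /t divfK ?subrr //; apply: contraTneq kj => ->.
    by rewrite mulr0 ltxx.
  by rewrite wS // kS // mulr0 subrr.
- rewrite !mxE mulrBr mulrCA subr_ge0.
  have [ki|ki] := leP (sgn P i * k i 0) 0.
    by apply: le_trans (wP i); exact: mulr_ge0_le0.
  have := jmin i; rewrite /J inS // ki => /(_ isT).
  by rewrite -/t (ratio_sgn P i) ler_pdivlMr.
Qed.

End SignedOrthants.

Arguments sgn {R d} P i.
Arguments sgn_neq0 {R d} P i.
Arguments sgnK {R d} P i.

Section ConformalHoffman.
Variables (R : realType) (m d : nat) (A : 'M[R]_(m, d)).
Implicit Types (S P : {set 'I_d}) (w k z : 'cV[R]_d).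

Lemma trivial_kernel_row_full p q (N : 'M[R]_(p, q)) :
  (forall v : 'cV[R]_q, N *m v = 0 -> v = 0) -> row_full N.
Proof.
move=> Ninj; rewrite /row_full -mxrank_tr -/(row_free N^T) -kermx_eq0; apply/eqP.
have HK : N *m (kermx N^T)^T = 0.
  have KN : kermx N^T *m N^T = 0 by apply/sub_kermxP.
  by rewrite -[LHS]trmxK trmx_mul trmxK KN trmx0.
apply: trmx_inj; rewrite trmx0; apply/matrixP => i j.
have : col j (kermx N^T)^T = 0 by apply: Ninj; rewrite colE mulmxA HK mul0mx.
by move/(congr1 (fun M : 'cV[R]_q => M i 0)); rewrite /= !mxE.
Qed.

(* If A is injective on the coordinate subspace of S, then A has a bounded
   left inverse there: a left inverse of A stacked with the projection that
   kills the coordinates in S. *)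
Lemma injective_bound S :
  (forall k, (forall i, i \notin S -> k i 0 = 0) -> A *m k = 0 -> k = 0) ->
  exists D, 0 <= D /\ forall w,
    (forall i, i \notin S -> w i 0 = 0) -> norm1 w <= D * norm1 (A *m w).
Proof.
move=> Ainj.
pose Q : 'M[R]_d := diag_mx (\row_i (if i \in S then 0 else 1)).
have QE (v : 'cV[R]_d) i : (Q *m v) i 0 = (if i \in S then 0 else 1) * v i 0.
  by rewrite mul_diag_mx !mxE.
pose N := col_mx A Q.
have Ninj (v : 'cV[R]_d) : N *m v = 0 -> v = 0.
  rewrite mul_col_mx -[0 : 'cV[R]_(m + d)]col_mx0 => /eq_col_mx [Av Qv].
  apply: Ainj Av => i iS.
  by have := congr1 (fun M : 'cV[R]_d => M i 0) Qv; rewrite /= QE (negbTE iS) mul1r mxE.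
have /row_fullP [B BN] := trivial_kernel_row_full Ninj.
exists (mxsum B); split; first by apply: sumr_ge0 => i _; exact: sumr_ge0.
move=> w wS.
have Qw : Q *m w = 0.
  apply/matrixP => i j; rewrite (ord1 j) QE mxE.
  by case: ifP => [_|/negbT iS]; rewrite ?mul0r ?wS ?mulr0.
rewrite {1}(_ : w = B *m (N *m w)); last by rewrite mulmxA BN mul1mx.
by apply: le_trans (norm1_mul _ _) _; rewrite mul_col_mx Qw norm1_col_mx norm10 addr0.
Qed.

Definition cone_injective S P :=
  forall k, orthant S P k -> A *m k = 0 -> k = 0.

Lemma cone_injective_sub S S' P :
  S' \subset S -> cone_injective S P -> cone_injective S' P.
Proof. by move=> sub inj k /(orthant_sub sub); exact: inj. Qed.

Lemma card_setD1_lt S j n : j \in S -> #|S| = n -> (#|S :\ j| < n)%N.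
Proof. by move=> jS <-; rewrite (cardsD1 j S) jS. Qed.

Lemma kernel_shift_bound S P w k i0 j1 :
  orthant S P w -> (forall i, i \notin S -> k i 0 = 0) -> A *m k = 0 ->
  sgn P i0 * k i0 0 < 0 -> 0 < sgn P j1 * k j1 0 ->
  exists j z, [/\ j \in S, orthant (S :\ j) P z, A *m z = A *m w &
    norm1 w <= (1 + norm1 k / `|k i0 0|) * norm1 z].
Proof.
move=> wo kS Ak ki0 kj1.
have [j [t [jS t0 zo]]] := ratio_step wo kS kj1.
exists j, (w - t *: k); split => //; first by rewrite mulmxBr -scalemxAr Ak scaler0 subr0.
set z := w - t *: k.
have k0 : 0 < `|k i0 0| by rewrite -(normr_sgnM P i0) normr_gt0 ltr0_neq0.
have tk : t * `|k i0 0| <= norm1 z.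
  apply: le_trans (norm1_entry z i0); rewrite -(normr_sgnM P i0 (z i0 0)).
  rewrite -(normr_sgnM P i0 (k i0 0)) (ltr0_norm ki0) !mxE mulrBr mulrCA.
  by apply: le_trans (ler_norm _); have := wo.2 i0; lra.
rewrite {1}(_ : w = z + t *: k); last by rewrite subrK.
apply: le_trans (norm1D _ _) _; rewrite norm1Z (ger0_norm t0) mulrDl mul1r lerD2l.
rewrite mulrAC ler_pdivlMr // mulrAC [norm1 k * _]mulrC.
by rewrite ler_wpM2r ?norm1_ge0.
Qed.

(* By induction on |S|: either A is
   injective on the whole coordinate subspace of S, or a kernel vector of
   mixed sign reduces to a smaller cone. *)
Lemma cone_injective_bound : exists D, 0 <= D /\ forall S P,
  cone_injective S P -> forall w, orthant S P w -> norm1 w <= D * norm1 (A *m w).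
Proof.
apply: uniform_bound_by_card => [S P D D' H le inj w wo|n D0 D0ge IH S P Sn].
  by apply: le_trans (H inj w wo) _; rewrite ler_wpM2r ?norm1_ge0.
have [inj|ninj] := pselect (cone_injective S P); last by exists 0; split => // /ninj.
have [[k [kS [Ak k0]]]|nok] := pselect (exists k,
    (forall i, i \notin S -> k i 0 = 0) /\ A *m k = 0 /\ k != 0); last first.
  have [|D [Dge HD]] := @injective_bound S.
    move=> k kS Ak; apply/eqP; apply: contra_notP nok => k0.
    by exists k; split => //; split => //; apply/negP.
  by exists D; split => // _ w [wS _]; exact: HD.
have [i0 ki0] : exists i, sgn P i * k i 0 < 0.
  by apply: not_orthant_neg_entry kS _ => /inj/(_ Ak) k0'; rewrite k0' eqxx in k0.
have [j1 kj1] : exists j, 0 < sgn P j * k j 0.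
  have [j] : exists j, sgn P j * (- k) j 0 < 0.
    apply: (not_orthant_neg_entry (S := S)).
      by move=> i /kS; rewrite mxE => ->; rewrite oppr0.
    move=> /inj; rewrite mulmxN Ak oppr0 => /(_ erefl)/eqP.
    by rewrite oppr_eq0 (negbTE k0).
  by rewrite mxE mulrN oppr_lt0; exists j.
exists (D0 * (1 + norm1 k / `|k i0 0|)).
split; first by rewrite mulr_ge0 // addr_ge0 // divr_ge0 ?norm1_ge0.
move=> _ w wo; have [j [z [jS zo Az wz]]] := kernel_shift_bound wo kS Ak ki0 kj1.
have := IH _ _ (card_setD1_lt jS Sn) (cone_injective_sub (subD1set S j) inj) z zo.
rewrite Az => zD; apply: le_trans wz _.
by rewrite [D0 * _]mulrC -mulrA ler_wpM2l // addr_ge0 // divr_ge0 ?norm1_ge0.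
Qed.

(* z is conformal to w: each z_i lies between 0 and w_i. *)
Definition conformal z w := forall i, 0 <= z i 0 * (w i 0 - z i 0).

Lemma conformal_refl w : conformal w w.
Proof. by move=> i; rewrite subrr mulr0. Qed.

Lemma conformal_trans z w' w : conformal z w' -> conformal w' w -> conformal z w.
Proof.
move=> h1 h2 i; have := h1 i; have := h2 i.
set a := z i 0; set b := w' i 0; set c := w i 0 => hb ha.
case: (ltgtP b 0) => hb0.
- have ha0 : a <= 0 by rewrite leNgt; apply/negP => ap; nra.
  nra.
- have ha0 : 0 <= a by rewrite leNgt; apply/negP => ap; nra.
  nra.
- by move: ha; rewrite hb0; nra.
Qed.

Lemma orthant_shift_conformal S S' P w k (t : R) :
  orthant S P k -> 0 <= t -> orthant S' P (w - t *: k) -> conformal (w - t *: k) w.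
Proof.
move=> ko t0 w'o i; rewrite !mxE opprB addrCA subrr addr0.
rewrite -[_ * _]mul1r -(sgnK P i) mulrACA [sgn P i * (t * _)]mulrCA.
apply: mulr_ge0; last by rewrite mulr_ge0 ?ko.2.
by have := w'o.2 i; rewrite !mxE.
Qed.

Definition conformal_bound (C : R) :=
  forall w, exists z, A *m z = A *m w /\ conformal z w /\ norm1 z <= C * norm1 (A *m w).

(* By induction on |S| for w in the orthant (S, P):
   if the cone contains a nonzero kernel vector, the ratio test moves w
   conformally to a smaller cone without changing A w; otherwise A is
   injective on the cone and z = w works by the conic bound. *)
Lemma conformal_decomposition : exists C, 0 <= C /\ conformal_bound C.
Proof.
have [D [D0 HD]] := cone_injective_bound.
suff [C [C0 HC]] : exists C : R, 0 <= C /\ forall S P w, orthant S P w ->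
    exists z, A *m z = A *m w /\ conformal z w /\ norm1 z <= C * norm1 (A *m w).
  by exists C; split => // w; exact: HC (orthant_full w).
apply: uniform_bound_by_card => [S P C C' H le w /H|n C0 C0ge IH S P Sn].
  move=> [z [Az [cz nz]]]; exists z; split => //; split => //.
  by apply: le_trans nz _; rewrite ler_wpM2r ?norm1_ge0.
have [[k [ko [Ak k0]]]|nok] := pselect (exists k, orthant S P k /\ A *m k = 0 /\ k != 0).
  exists C0; split => // w wo; have [j1 kj1] := orthant_pos_entry ko k0.
  have [j [t [jS t0 w'o]]] := ratio_step wo ko.1 kj1.
  have Aw' : A *m (w - t *: k) = A *m w by rewrite mulmxBr -scalemxAr Ak scaler0 subr0.
  have [z [Az [cz nz]]] := IH _ _ (card_setD1_lt jS Sn) _ w'o.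
  exists z; rewrite -Aw'; split => //; split => //.
  by apply: conformal_trans cz _; exact: orthant_shift_conformal ko t0 w'o.
exists D; split => // w wo; exists w; split => //; split; first exact: conformal_refl.
apply: HD wo => k ko Ak; apply/eqP; apply: contra_notP nok => k0.
by exists k; split => //; split => //; apply/negP.
Qed.

End ConformalHoffman.

Section LPStability.
Variables (R : realType) (m d : nat) (A : 'M[R]_(m, d)) (c : 'cV[R]_d).

Lemma conformal_step_ge0 (x y z : R) :
  0 <= x -> 0 <= y -> 0 <= z * ((y - x) - z) -> 0 <= x + z.
Proof.
move=> x0 y0 h; have [z0|z0] := leP 0 z; first exact: addr_ge0.
have : y - x - z <= 0.
  by rewrite leNgt; apply/negP => p; move: h; rewrite leNgt nmulr_rlt0 ?p.
lra.
Qed.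

Lemma conformal_feasible beta beta' x y z :
  feasible A beta x -> feasible A beta' y -> A *m z = beta' - beta ->
  conformal z (y - x) -> feasible A beta' (x + z).
Proof.
move=> [Ax x0] [Ay y0] Az cz; split; first by rewrite mulmxDr Az Ax addrC subrK.
by move=> i; rewrite mxE; apply: conformal_step_ge0 (x0 i) (y0 i) _; move: (cz i); rewrite !mxE.
Qed.

Lemma feasible_shift C : conformal_bound A C ->
  forall beta beta' x y, feasible A beta x -> feasible A beta' y ->
  exists z, feasible A beta' (x + z) /\ norm1 z <= C * norm1 (beta' - beta).
Proof.
move=> HC beta beta' x y fx fy; have [z [Az [cz nz]]] := HC (y - x).
have Ayx : A *m (y - x) = beta' - beta by rewrite mulmxBr fx.1 fy.1.
by exists z; rewrite -Ayx; split => //; apply: conformal_feasible fx fy _ cz; rewrite Az.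
Qed.

Lemma opt_value_lipschitz C : conformal_bound A C ->
  forall beta beta' x y, OPT A c beta x -> OPT A c beta' y ->
  `|obj c y - obj c x| <= norm1 c * C * norm1 (beta' - beta).
Proof.
move=> HC beta beta' x y [fx ox] [fy oy].
have [z1 [f1 nz1]] := feasible_shift HC fx fy.
have [z2 [f2 nz2]] := feasible_shift HC fy fx.
have := oy _ f1; have := ox _ f2; rewrite !objD.
have := obj_bound c z1; have := obj_bound c z2; rewrite !ler_norml.
have e1 : norm1 c * norm1 z1 <= norm1 c * C * norm1 (beta' - beta).
  by rewrite -mulrA ler_wpM2l ?norm1_ge0.
have e2 : norm1 c * norm1 z2 <= norm1 c * C * norm1 (beta' - beta).
  by rewrite -mulrA norm1B ler_wpM2l ?norm1_ge0.
move=> /andP [? ?] /andP [? ?] ? ?; apply/andP; split; lra.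
Qed.

(* Lipschitz continuity of beta |-> OPT(beta) (Walkup-Wets): decompose y - x
   conformally for the stacked matrix (A; c^T), which also moves the
   objective to its optimal value. *)
Lemma opt_lipschitz : exists L, 0 <= L /\
  forall beta beta' x y, OPT A c beta x -> OPT A c beta' y ->
    exists x', OPT A c beta' x' /\ norm1 (x' - x) <= L * norm1 (beta' - beta).
Proof.
have [C1 [C1ge HC1]] := conformal_decomposition A.
have [C2 [C2ge HC2]] := conformal_decomposition (col_mx A c^T).
exists (C2 * (1 + norm1 c * C1)); split.
  by rewrite mulr_ge0 // addr_ge0 // mulr_ge0 ?norm1_ge0.
move=> beta beta' x y Ox Oy; have hobj := opt_value_lipschitz HC1 Ox Oy.
case: Ox => fx ox; case: Oy => fy oy.
have [z [Azc [conf nz]]] := HC2 (y - x); move: Azc.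
rewrite !mul_col_mx => /eq_col_mx [Az cz].
have Ayx : A *m (y - x) = beta' - beta by rewrite mulmxBr fx.1 fy.1.
have oz : obj c z = obj c y - obj c x by rewrite -obj_trmx cz obj_trmx objB.
exists (x + z); split.
  split; first by apply: conformal_feasible fx fy _ conf; rewrite Az.
  by move=> y' fy'; rewrite objD oz addrC subrK; exact: oy.
rewrite (addrC x z) addrK; apply: le_trans nz _; rewrite mul_col_mx Ayx norm1_col_mx.
rewrite /norm1 big_ord1 -/(norm1 _) obj_trmx objB -mulrA ler_wpM2l //.
by rewrite mulrDl mul1r lerD2l.
Qed.

End LPStability.

Local Open Scope classical_set_scope.

Lemma excess_le (R : realType) d (S T : set 'cV[R]_d) (e : R) :
  (forall x, S x -> exists2 y, T y & enorm (x - y) <= e) ->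
  (ereal_sup [set ereal_inf [set (enorm (x - y))%:E | y in T] | x in S] <= e%:E)%E.
Proof.
move=> close; apply: ge_ereal_sup => _ [x Sx <-]; have [y Ty xy] := close x Sx.
have xyT : [set (enorm (x - y0))%:E | y0 in T] (enorm (x - y))%:E by exists y.
by apply: le_trans (ereal_inf_lbound xyT) _; rewrite lee_fin.
Qed.

Lemma hausdorff_opt_lipschitz (R : realType) m d (A : 'M[R]_(m, d)) (c : 'cV[R]_d) :
  exists K, 0 <= K /\ forall beta beta', OPT A c beta !=set0 -> OPT A c beta' !=set0 ->
    (hausdorff (OPT A c beta) (OPT A c beta') <= (K * enorm (beta - beta'))%:E)%E.
Proof.
have [L [L0 HL]] := opt_lipschitz A c.
exists (L * m%:R); split; first exact: mulr_ge0.
have close b1 b2 : OPT A c b2 !=set0 -> forall x, OPT A c b1 x ->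
    exists2 y, OPT A c b2 y & enorm (x - y) <= L * m%:R * enorm (b1 - b2).
  move=> [y Oy] x Ox; have [x' [Ox' nx']] := HL _ _ _ _ Ox Oy.
  exists x' => //; apply: le_trans (enorm_le_norm1 _) _; rewrite norm1B.
  by apply: le_trans nx' _; rewrite norm1B -mulrA ler_wpM2l // norm1_le_enorm.
move=> b1 b2 h1 h2; rewrite /hausdorff ge_max.
by apply/andP; split; apply: excess_le; [|rewrite enormB]; exact: close.
Qed.

Section ProbabilityBounds.
Variables (R : realType) (dO : measure_display) (Omega : measurableType dO).
Variable P : probability Omega R.

Lemma probability_fin (E : set Omega) : measurable E -> P E = (fine (P E))%:E.
Proof.
move=> mE; rewrite fineK // ge0_fin_numE ?measure_ge0 //.
by apply: le_lt_trans (probability_le1 P mE) _; exact: ltry.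
Qed.

Lemma probability_setI_ge (E1 E2 : set Omega) (a b : R) :
  measurable E1 -> measurable E2 -> (P E1 >= (1 - a)%:E)%E -> (P E2 >= (1 - b)%:E)%E ->
  (P (E1 `&` E2) >= (1 - (a + b))%:E)%E.
Proof.
move=> m1 m2 h1 h2; have m12 : measurable (E1 `&` E2) by exact: measurableI.
have : (P (~` (E1 `&` E2)) <= P (~` E1) + P (~` E2))%E.
  by rewrite setCI; apply: measureU2; apply: measurableC.
rewrite !probability_setC //; move: h1 h2.
rewrite (probability_fin m1) (probability_fin m2) (probability_fin m12).
by rewrite -!EFinB -EFinD !lee_fin; lra.
Qed.

End ProbabilityBounds.

Unset Implicit Arguments. Set Strict Implicit.

Theorem theorem3p4 (R : realType) (m d : nat) (A : 'M[R]_(m, d))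
  (b : 'cV[R]_m) (c : 'cV[R]_d)
  (dO : measure_display) (Omega : measurableType dO) (P : probability Omega R)
  (bn : nat -> Omega -> 'cV[R]_m) (r : nat -> R) :
  (m <= d)%N -> \rank A = m ->
  (* (A1) *)
  OPT A c b !=set0 ->
  (exists K : R, forall x, OPT A c b x -> enorm x <= K) ->
  (* b_n are random vectors *)
  (forall n (i : 'I_m), measurable_fun setT (fun w => bn n w i 0)) ->
  (* (B2): P((P_{b_n}) has an optimal solution) -> 1 *)
  (forall eps : R, 0 < eps -> exists N : nat, forall n, (N <= n)%N ->
     exists E : set Omega, measurable E /\ (P E >= (1 - eps)%:E)%E /\
       forall w, E w -> OPT A c (bn n w) !=set0) ->
  (r @ \oo --> +oo) ->
  OP_bound P (fun n w => (enorm (bn n w - b))%:E) (fun n => (r n)^-1) ->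
  OP_bound P (fun n w => hausdorff (OPT A c (bn n w)) (OPT A c b))
          (fun n => (r n)^-1).
Proof.
move=> _ _ Ob _ _ B2 _ bnOP eps eps0.
have [K [K0 HK]] := hausdorff_opt_lipschitz A c.
have eps2 : 0 < eps / 2 by rewrite divr_gt0.
have [M [M0 [N1 H1]]] := bnOP _ eps2.
have [N2 H2] := B2 _ eps2.
exists ((K + 1) * M); split; first by rewrite mulr_gt0 // ltr_pwDr.
exists (maxn N1 N2) => n; rewrite geq_max => /andP [n1 n2].
have [E1 [mE1 [pE1 hE1]]] := H1 n n1.
have [E2 [mE2 [pE2 hE2]]] := H2 n n2.
exists (E1 `&` E2); split; first exact: measurableI.
split; first by rewrite {1}(splitr eps); exact: probability_setI_ge.
move=> w [w1 w2]; apply: le_trans (HK _ _ (hE2 w w2) Ob) _.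
have := hE1 w w1; rewrite /= !lee_fin -mulrA => bnw.
apply: le_trans (_ : (K + 1) * enorm (bn n w - b) <= _); last first.
  by rewrite ler_wpM2l // addr_ge0.
by rewrite ler_wpM2r ?lerDl // /enorm sqrtr_ge0.
Qed.
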